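(* For every undirected graph $X$, the category $C_X$ of coverings of $X$ admits all small limits and all small colimits.
   Context: An undirected graph $X$ consists of nodes $X(0)$, half-arcs $X(1)$, maps $s,t:X(1)\to X(0)$ and an involution $\iota$ of $X(1)$ with $s\circ\iota=t$; morphisms are pairs of maps commuting with $s,t,\iota$. An arc is a pair $\{u,\iota(u)\}$, $u\in X(1)$; for a node $x$, $X(x,* )$ is the set of arcs $\{u,\iota(u)\}$ with $s(u)=x$ or $t(u)=x$. A morphism $f:X\to Y$ is a covering if for every node $x$ of $X$ the induced map $f_x:X(x,* )\to Y(f_0(x),* )$ on arcs is bijective (in particular $\emptyset\to X$ is a covering). $C_X$ is the category whose objects are coverings $f:Y\to X$ and whose morphisms from $f:Y\to X$ to $g:Z\to X$ are coverings $h:Y\to Z$ with $g\circ h=f$. *)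

(* An undirected graph: nodes X(0), half-arcs X(1), source/target maps and an
   involution iota of X(1) with s o iota = t. *)
Record graph : Type := Graph {
  node : Type;
  harc : Type;
  src : harc -> node;
  tgt : harc -> node;
  inv : harc -> harc;
  inv_invol : forall u, inv (inv u) = u;
  src_inv : forall u, src (inv u) = tgt u
}.

Arguments src {g} u.
Arguments tgt {g} u.
Arguments inv {g} u.

Record gmor (X Y : graph) : Type := GMor {
  m0 : node X -> node Y;
  m1 : harc X -> harc Y;
  m_src : forall u, m0 (src u) = src (m1 u);
  m_tgt : forall u, m0 (tgt u) = tgt (m1 u);
  m_inv : forall u, m1 (inv u) = inv (m1 u)
}.

Arguments m0 {X Y} g _.
Arguments m1 {X Y} g _.

(* Two half-arcs determine the same arc {u, iota u}. *)
Definition same_arc {X : graph} (u v : harc X) : Prop := u = v \/ u = inv v.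

Definition at_node {X : graph} (x : node X) (u : harc X) : Prop :=
  src u = x \/ tgt u = x.

(* f is a covering: for every node x, the induced map on arcs
   f_x : X(x,-) -> Y(f0 x,-), {u, iota u} |-> {f1 u, iota (f1 u)},
   is bijective (arcs are represented by half-arcs modulo same_arc). *)
Definition is_covering {X Y : graph} (f : gmor X Y) : Prop :=
  forall x : node X,
    (forall u u' : harc X, at_node x u -> at_node x u' ->
        same_arc (m1 f u) (m1 f u') -> same_arc u u') /\
    (forall v : harc Y, at_node (m0 f x) v ->
        exists u : harc X, at_node x u /\ same_arc (m1 f u) v).

Definition comp_eq {X Y Z : graph} (g : gmor Y Z) (f : gmor X Y) (k : gmor X Z)
  : Prop :=
  (forall x, m0 g (m0 f x) = m0 k x) /\ (forall u, m1 g (m1 f u) = m1 k u).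

Definition gmor_eq {X Y : graph} (f g : gmor X Y) : Prop :=
  (forall x, m0 f x = m0 g x) /\ (forall u, m1 f u = m1 g u).

Record cov_obj (X : graph) : Type := CovObj {
  cov_dom : graph;
  cov_map : gmor cov_dom X;
  cov_is_covering : is_covering cov_map
}.

Arguments cov_dom {X} c.
Arguments cov_map {X} c.

Record cov_hom {X : graph} (A B : cov_obj X) : Type := CovHom {
  ch_map : gmor (cov_dom A) (cov_dom B);
  ch_is_covering : is_covering ch_map;
  ch_comm : comp_eq (cov_map B) ch_map (cov_map A)
}.

Arguments ch_map {X A B} c.

Definition hcomp_eq {X : graph} {A B C : cov_obj X}
  (h2 : cov_hom B C) (h1 : cov_hom A B) (h3 : cov_hom A C) : Prop :=
  comp_eq (ch_map h2) (ch_map h1) (ch_map h3).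

Definition hom_eq {X : graph} {A B : cov_obj X} (h h' : cov_hom A B) : Prop :=
  gmor_eq (ch_map h) (ch_map h').

Definition is_id_hom {X : graph} {A : cov_obj X} (h : cov_hom A A) : Prop :=
  (forall x, m0 (ch_map h) x = x) /\ (forall u, m1 (ch_map h) u = u).

Record smallcat : Type := SmallCat {
  ob : Type;
  hom : ob -> ob -> Type;
  cid : forall a, hom a a;
  ccomp : forall a b c, hom b c -> hom a b -> hom a c;
  ccomp_id_l : forall a b (f : hom a b), ccomp a b b (cid b) f = f;
  ccomp_id_r : forall a b (f : hom a b), ccomp a a b f (cid a) = f;
  ccomp_assoc : forall a b c d (h : hom c d) (g : hom b c) (f : hom a b),
      ccomp a c d h (ccomp a b c g f) = ccomp a b d (ccomp b c d h g) f
}.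

Arguments hom {s} a b.
Arguments cid {s} a.
Arguments ccomp {s a b c} g f.

Record diagram (J : smallcat) (X : graph) : Type := Diagram {
  dob : ob J -> cov_obj X;
  dhom : forall a b, @hom J a b -> cov_hom (dob a) (dob b);
  dhom_id : forall a, is_id_hom (dhom a a (cid a));
  dhom_comp : forall a b c (g : @hom J b c) (f : @hom J a b),
      hcomp_eq (dhom b c g) (dhom a b f) (dhom a c (ccomp g f))
}.

Arguments dob {J X} d a.
Arguments dhom {J X} d {a b} f.

Definition is_cone {J : smallcat} {X : graph} (F : diagram J X) (L : cov_obj X)
  (p : forall j, cov_hom L (dob F j)) : Prop :=
  forall i j (u : @hom J i j), hcomp_eq (dhom F u) (p i) (p j).

Definition is_limit {J : smallcat} {X : graph} (F : diagram J X) (L : cov_obj X)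
  (p : forall j, cov_hom L (dob F j)) : Prop :=
  is_cone F L p /\
  forall (M : cov_obj X) (q : forall j, cov_hom M (dob F j)),
    is_cone F M q ->
    (exists h : cov_hom M L, forall j, hcomp_eq (p j) h (q j)) /\
    (forall h h' : cov_hom M L,
        (forall j, hcomp_eq (p j) h (q j)) ->
        (forall j, hcomp_eq (p j) h' (q j)) -> hom_eq h h').

Definition is_cocone {J : smallcat} {X : graph} (F : diagram J X) (L : cov_obj X)
  (p : forall j, cov_hom (dob F j) L) : Prop :=
  forall i j (u : @hom J i j), hcomp_eq (p j) (dhom F u) (p i).

Definition is_colimit {J : smallcat} {X : graph} (F : diagram J X) (L : cov_obj X)
  (p : forall j, cov_hom (dob F j) L) : Prop :=
  is_cocone F L p /\
  forall (M : cov_obj X) (q : forall j, cov_hom (dob F j) M),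
    is_cocone F M q ->
    (exists h : cov_hom L M, forall j, hcomp_eq h (p j) (q j)) /\
    (forall h h' : cov_hom L M,
        (forall j, hcomp_eq h (p j) (q j)) ->
        (forall j, hcomp_eq h' (p j) (q j)) -> hom_eq h h').

Definition has_all_small_limits (X : graph) : Prop :=
  forall (J : smallcat) (F : diagram J X),
    exists (L : cov_obj X) (p : forall j, cov_hom L (dob F j)), is_limit F L p.

Definition has_all_small_colimits (X : graph) : Prop :=
  forall (J : smallcat) (F : diagram J X),
    exists (L : cov_obj X) (p : forall j, cov_hom (dob F j) L), is_colimit F L p.

From Stdlib Require Import Relations List FunctionalExtensionality
  PropExtensionality ProofIrrelevance IndefiniteDescription.

(* The basic observation is a two-out-of-three property: a morphism over X
   between coverings of X is itself a covering, so morphisms of C_X are just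
   morphisms of graphs over X ([over_hom]).

   Given objects A_i and morphisms phi_k : A_(s k) -> A_(t k) of
   C_X, glue the disjoint union of the A_i along the phi_k (a quotient graph).
   Because the phi_k are coverings, arcs can be transported along the gluing
   relation, which makes the glued graph a covering of X; its universal
   property is that of the quotient.

   A node m of a cone is recorded by its images in X and in every
   F j together with its future: the words of arc labels walkable from the
   image of m after any morphism compatible with the legs.  Amalgamation makes
   futures invariant under such morphisms, determinism of coverings makes them
   evolve along arcs, and the recorded states of all cones form a covering of
   X which is the limit: the unique factorisation sends everything to its
   state. *)

Lemma tgt_inv {X : graph} (u : harc X) : tgt (inv u) = src u.
Proof. rewrite <- src_inv, inv_invol; reflexivity. Qed.

Lemma same_arc_refl {X : graph} (u : harc X) : same_arc u u.
Proof. left; reflexivity. Qed.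

Lemma same_arc_sym {X : graph} (u v : harc X) : same_arc u v -> same_arc v u.
Proof. intros [-> | ->]; [left | right; rewrite inv_invol]; reflexivity. Qed.

Lemma same_arc_trans {X : graph} (u v w : harc X) :
  same_arc u v -> same_arc v w -> same_arc u w.
Proof.
  unfold same_arc; intros [-> | ->] [-> | ->]; auto.
  left; rewrite inv_invol; reflexivity.
Qed.

Lemma same_arc_inv {X : graph} (u : harc X) : same_arc u (inv u).
Proof. right; rewrite inv_invol; reflexivity. Qed.

Lemma at_node_inv {X : graph} (x : node X) (u : harc X) :
  at_node x u -> at_node x (inv u).
Proof. unfold at_node; rewrite src_inv, tgt_inv; tauto. Qed.

Lemma at_node_src {X : graph} (x : node X) (u : harc X) :
  at_node x u -> exists u', src u' = x /\ same_arc u u'.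
Proof.
  intros [H | H].
  - exists u; split; [exact H | apply same_arc_refl].
  - exists (inv u); split; [rewrite src_inv; exact H | apply same_arc_inv].
Qed.

Lemma gmor_at_node {X Y : graph} (f : gmor X Y) x u :
  at_node x u -> at_node (m0 f x) (m1 f u).
Proof. intros [<- | <-]; [left | right]; symmetry; [apply m_src | apply m_tgt]. Qed.

Lemma gmor_same_arc {X Y : graph} (f : gmor X Y) u v :
  same_arc u v -> same_arc (m1 f u) (m1 f v).
Proof. intros [-> | ->]; [left; reflexivity | right; apply m_inv]. Qed.

Lemma covering_tgt {X Y : graph} (f : gmor X Y) (e e' : harc X) :
  is_covering f -> src e = src e' -> m1 f e = m1 f e' -> tgt e = tgt e'.
Proof.
  intros Hf Hs Hp.
  destruct (proj1 (Hf (src e)) e e') as [-> | ->].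
  - left; reflexivity.
  - left; symmetry; exact Hs.
  - rewrite Hp; apply same_arc_refl.
  - reflexivity.
  - rewrite src_inv in Hs; rewrite tgt_inv, Hs; reflexivity.
Qed.

Definition gid (X : graph) : gmor X X :=
  GMor X X (fun x => x) (fun u => u)
    (fun _ => eq_refl) (fun _ => eq_refl) (fun _ => eq_refl).

Definition gcomp {X Y Z : graph} (g : gmor Y Z) (f : gmor X Y) : gmor X Z.
Proof.
  refine (GMor X Z (fun x => m0 g (m0 f x)) (fun u => m1 g (m1 f u)) _ _ _);
    intro u; [rewrite 2!m_src | rewrite 2!m_tgt | rewrite 2!m_inv]; reflexivity.
Defined.

Lemma covering_cancel {X Y Z : graph} (g : gmor Y Z) (f : gmor X Y) (k : gmor X Z) :
  comp_eq g f k -> is_covering k -> is_covering g -> is_covering f.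
Proof.
  intros [E0 E1] Hk Hg x; split.
  - intros u u' Hu Hu' H.
    apply (proj1 (Hk x)); auto.
    rewrite <- 2!E1; apply gmor_same_arc; exact H.
  - intros v Hv.
    destruct (proj2 (Hk x) (m1 g v)) as [u [Hu1 Hu2]].
    { rewrite <- E0; apply gmor_at_node; exact Hv. }
    exists u; split; [exact Hu1 |].
    apply (proj1 (Hg (m0 f x))); auto using gmor_at_node.
    rewrite E1; exact Hu2.
Qed.

(* Consequently every morphism of graphs over X between coverings of X is a
   morphism of C_X; this is how all morphisms below are built. *)
Definition over_hom {X : graph} (A B : cov_obj X) (f : gmor (cov_dom A) (cov_dom B))
  (Hf : comp_eq (cov_map B) f (cov_map A)) : cov_hom A B :=
  CovHom X A B f
    (covering_cancel _ _ _ Hf (cov_is_covering _ A) (cov_is_covering _ B)) Hf.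

Definition hid {X : graph} (A : cov_obj X) : cov_hom A A :=
  over_hom A A (gid _) (conj (fun _ => eq_refl) (fun _ => eq_refl)).

Definition hcomp {X : graph} {A B C : cov_obj X} (g : cov_hom B C) (f : cov_hom A B)
  : cov_hom A C.
Proof.
  refine (over_hom A C (gcomp (ch_map g) (ch_map f)) _).
  destruct (ch_comm _ _ g) as [g0 g1], (ch_comm _ _ f) as [f0 f1].
  split; intro; simpl; [rewrite g0, f0 | rewrite g1, f1]; reflexivity.
Defined.

(** * Quotients by the equivalence relation generated by a relation *)

Notation eqv R := (clos_refl_sym_trans _ R).

Lemma sig_ext {A : Type} {P : A -> Prop} (a b : sig P) :
  proj1_sig a = proj1_sig b -> a = b.
Proof. destruct a, b; simpl; intros ->; f_equal; apply proof_irrelevance. Qed.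

Section Quotient.
Context {A : Type} (R : A -> A -> Prop).

(* A class is the predicate "equivalent to a"; representatives are chosen by
   indefinite description. *)
Definition quot : Type := {c : A -> Prop | exists a, c = eqv R a}.

Definition qclass (a : A) : quot := exist _ (eqv R a) (ex_intro _ a eq_refl).

Definition qrepr (c : quot) : A :=
  proj1_sig (constructive_indefinite_description _ (proj2_sig c)).

Lemma qclass_repr (c : quot) : qclass (qrepr c) = c.
Proof.
  unfold qrepr; destruct (constructive_indefinite_description _ (proj2_sig c)) as [a Ha].
  apply sig_ext; simpl; symmetry; exact Ha.
Qed.

Lemma qclass_eq (a b : A) : qclass a = qclass b <-> eqv R a b.
Proof.
  split.
  - intro H; apply (f_equal (@proj1_sig _ _)) in H; simpl in H.
    assert (Hb : eqv R b b) by apply rst_refl.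
    rewrite <- H in Hb; exact Hb.
  - intro H; apply sig_ext; simpl.
    apply functional_extensionality; intro c; apply propositional_extensionality.
    split; intro H'; [apply rst_trans with a; [apply rst_sym |] | apply rst_trans with b];
      assumption.
Qed.

Lemma qrepr_class (a : A) : eqv R (qrepr (qclass a)) a.
Proof. apply qclass_eq; rewrite qclass_repr; reflexivity. Qed.

End Quotient.

Lemma eqv_map {A B : Type} (R : A -> A -> Prop) (S : B -> B -> Prop) (f : A -> B) :
  (forall a b, R a b -> eqv S (f a) (f b)) ->
  forall a b, eqv R a b -> eqv S (f a) (f b).
Proof.
  intros H a b Hab; induction Hab; eauto using rst_refl, rst_sym, rst_trans.
Qed.

Lemma eqv_fun {A B : Type} (R : A -> A -> Prop) (f : A -> B) :
  (forall a b, R a b -> f a = f b) -> forall a b, eqv R a b -> f a = f b.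
Proof. intros H a b Hab; induction Hab; [auto | reflexivity | congruence | congruence]. Qed.

Section SumGraph.
Context {I : Type} (G : I -> graph).

Definition sum_graph : graph.
Proof.
  refine (Graph {i : I & node (G i)} {i : I & harc (G i)}
            (fun z => existT _ (projT1 z) (src (projT2 z)))
            (fun z => existT _ (projT1 z) (tgt (projT2 z)))
            (fun z => existT _ (projT1 z) (inv (projT2 z))) _ _);
    intros [i u]; simpl; [rewrite inv_invol | rewrite src_inv]; reflexivity.
Defined.

Definition sum_in (i : I) : gmor (G i) sum_graph :=
  GMor (G i) sum_graph (fun x => existT _ i x) (fun u => existT _ i u)
    (fun _ => eq_refl) (fun _ => eq_refl) (fun _ => eq_refl).

Definition sum_copair {H : graph} (f : forall i, gmor (G i) H) : gmor sum_graph H.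
Proof.
  refine (GMor sum_graph H (fun z => m0 (f (projT1 z)) (projT2 z))
            (fun u => m1 (f (projT1 u)) (projT2 u)) _ _ _);
    intros [i u]; simpl; [apply m_src | apply m_tgt | apply m_inv].
Defined.

End SumGraph.

Section QuotientGraph.
Context (G : graph) (RN : node G -> node G -> Prop) (RA : harc G -> harc G -> Prop).
Hypothesis RA_src : forall u v, RA u v -> RN (src u) (src v).
Hypothesis RA_inv : forall u v, RA u v -> RA (inv u) (inv v).

Lemma eqv_src u v : eqv RA u v -> eqv RN (src u) (src v).
Proof. apply eqv_map; intros; apply rst_step; auto. Qed.

Lemma eqv_inv u v : eqv RA u v -> eqv RA (inv u) (inv v).
Proof. apply eqv_map; intros; apply rst_step; auto. Qed.

Lemma eqv_tgt u v : eqv RA u v -> eqv RN (tgt u) (tgt v).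
Proof. rewrite <- 2!src_inv; intro; apply eqv_src, eqv_inv; assumption. Qed.

Definition qg_src (c : quot RA) : quot RN := qclass RN (src (qrepr RA c)).
Definition qg_tgt (c : quot RA) : quot RN := qclass RN (tgt (qrepr RA c)).
Definition qg_inv (c : quot RA) : quot RA := qclass RA (inv (qrepr RA c)).

Lemma qg_src_class u : qg_src (qclass RA u) = qclass RN (src u).
Proof. apply qclass_eq, eqv_src, qrepr_class. Qed.

Lemma qg_tgt_class u : qg_tgt (qclass RA u) = qclass RN (tgt u).
Proof. apply qclass_eq, eqv_tgt, qrepr_class. Qed.

Lemma qg_inv_class u : qg_inv (qclass RA u) = qclass RA (inv u).
Proof. apply qclass_eq, eqv_inv, qrepr_class. Qed.

Lemma qg_inv_invol c : qg_inv (qg_inv c) = c.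
Proof.
  rewrite <- (qclass_repr RA c), 2!qg_inv_class, inv_invol; reflexivity.
Qed.

Lemma qg_src_inv c : qg_src (qg_inv c) = qg_tgt c.
Proof.
  rewrite <- (qclass_repr RA c), qg_inv_class, qg_src_class, qg_tgt_class, src_inv.
  reflexivity.
Qed.

Definition quotient_graph : graph :=
  Graph (quot RN) (quot RA) qg_src qg_tgt qg_inv qg_inv_invol qg_src_inv.

Definition quotient_proj : gmor G quotient_graph.
Proof.
  refine (GMor G quotient_graph (qclass RN) (qclass RA) _ _ _); intro u; symmetry;
    [apply qg_src_class | apply qg_tgt_class | apply qg_inv_class].
Defined.

Section Descent.
Context {H : graph} (f : gmor G H).
Hypothesis f_RN : forall x y, RN x y -> m0 f x = m0 f y.
Hypothesis f_RA : forall u v, RA u v -> m1 f u = m1 f v.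

Lemma desc_node_class x : m0 f (qrepr RN (qclass RN x)) = m0 f x.
Proof. apply (eqv_fun RN (m0 f) f_RN), qrepr_class. Qed.

Lemma desc_harc_class u : m1 f (qrepr RA (qclass RA u)) = m1 f u.
Proof. apply (eqv_fun RA (m1 f) f_RA), qrepr_class. Qed.

Definition quotient_desc : gmor quotient_graph H.
Proof.
  refine (GMor quotient_graph H (fun c => m0 f (qrepr RN c))
            (fun c => m1 f (qrepr RA c)) _ _ _); intro c; simpl;
    unfold qg_src, qg_tgt, qg_inv; rewrite ?desc_node_class, ?desc_harc_class;
    [apply m_src | apply m_tgt | apply m_inv].
Defined.

Lemma quotient_desc_proj : comp_eq quotient_desc quotient_proj f.
Proof. split; intro; simpl; [apply desc_node_class | apply desc_harc_class]. Qed.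

End Descent.

Lemma quotient_hom_ext {H : graph} (h h' : gmor quotient_graph H) (k : gmor G H) :
  comp_eq h quotient_proj k -> comp_eq h' quotient_proj k -> gmor_eq h h'.
Proof.
  intros [E0 E1] [E0' E1']; split; intro c.
  - rewrite <- (qclass_repr RN c); exact (eq_trans (E0 _) (eq_sym (E0' _))).
  - rewrite <- (qclass_repr RA c); exact (eq_trans (E1 _) (eq_sym (E1' _))).
Qed.

End QuotientGraph.

(** * Gluing coverings along morphisms of C_X *)

(* A family of objects of C_X together with a family of morphisms between
   them; its gluing is their colimit in C_X. *)
Record glue_data (X : graph) : Type := GlueData {
  gl_index : Type;
  gl_obj : gl_index -> cov_obj X;
  gl_edge : Type;
  gl_src : gl_edge -> gl_index;
  gl_tgt : gl_edge -> gl_index;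
  gl_map : forall k, cov_hom (gl_obj (gl_src k)) (gl_obj (gl_tgt k))
}.

Arguments gl_index {X} _.
Arguments gl_obj {X} _ _.
Arguments gl_edge {X} _.
Arguments gl_src {X} _ _.
Arguments gl_tgt {X} _ _.
Arguments gl_map {X} _ _.

Section Gluing.
Context {X : graph} (D : glue_data X).

Definition glue_sum : graph := sum_graph (fun i => cov_dom (gl_obj D i)).

Definition glue_node (z z' : node glue_sum) : Prop :=
  exists k x, z = existT _ (gl_src D k) x /\
              z' = existT _ (gl_tgt D k) (m0 (ch_map (gl_map D k)) x).

Definition glue_harc (z z' : harc glue_sum) : Prop :=
  exists k u, z = existT _ (gl_src D k) u /\
              z' = existT _ (gl_tgt D k) (m1 (ch_map (gl_map D k)) u).

Lemma glue_harc_src u v : glue_harc u v -> glue_node (src u) (src v).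
Proof.
  intros (k & w & -> & ->); exists k, (src w); simpl; rewrite m_src; split; reflexivity.
Qed.

Lemma glue_harc_inv u v : glue_harc u v -> glue_harc (inv u) (inv v).
Proof.
  intros (k & w & -> & ->); exists k, (inv w); simpl; rewrite m_inv; split; reflexivity.
Qed.

Definition glued_graph : graph :=
  quotient_graph glue_sum glue_node glue_harc glue_harc_src glue_harc_inv.

Definition glue_proj : gmor glue_sum glued_graph :=
  quotient_proj glue_sum glue_node glue_harc glue_harc_src glue_harc_inv.

Section GluedDesc.
Context {H : graph} (f : forall i, gmor (cov_dom (gl_obj D i)) H).
Hypothesis f_compat :
  forall k, comp_eq (f (gl_tgt D k)) (ch_map (gl_map D k)) (f (gl_src D k)).

Lemma copair_glue_node z z' :
  glue_node z z' -> m0 (sum_copair _ f) z = m0 (sum_copair _ f) z'.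
Proof. intros (k & x & -> & ->); symmetry; apply (f_compat k). Qed.

Lemma copair_glue_harc z z' :
  glue_harc z z' -> m1 (sum_copair _ f) z = m1 (sum_copair _ f) z'.
Proof. intros (k & u & -> & ->); symmetry; apply (f_compat k). Qed.

Definition glued_desc : gmor glued_graph H :=
  quotient_desc glue_sum glue_node glue_harc glue_harc_src glue_harc_inv
    (sum_copair _ f) copair_glue_node copair_glue_harc.

Lemma glued_desc_node i x :
  m0 glued_desc (qclass glue_node (existT _ i x)) = m0 (f i) x.
Proof.
  exact (proj1 (quotient_desc_proj glue_sum glue_node glue_harc glue_harc_src
                glue_harc_inv _ copair_glue_node copair_glue_harc) (existT _ i x)).
Qed.

Lemma glued_desc_harc i u :
  m1 glued_desc (qclass glue_harc (existT _ i u)) = m1 (f i) u.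
Proof.
  exact (proj2 (quotient_desc_proj glue_sum glue_node glue_harc glue_harc_src
                glue_harc_inv _ copair_glue_node copair_glue_harc) (existT _ i u)).
Qed.

End GluedDesc.

Definition glued_map : gmor glued_graph X :=
  glued_desc (fun i => cov_map (gl_obj D i)) (fun k => ch_comm _ _ (gl_map D k)).

Lemma glued_map_node i x :
  m0 glued_map (qclass glue_node (existT _ i x)) = m0 (cov_map (gl_obj D i)) x.
Proof. exact (glued_desc_node _ _ i x). Qed.

Lemma glued_map_harc i u :
  m1 glued_map (qclass glue_harc (existT _ i u)) = m1 (cov_map (gl_obj D i)) u.
Proof. exact (glued_desc_harc _ _ i u). Qed.

(* Arcs can be transported along the gluing relation: since the gluing maps
   are coverings, every arc at z is glued to an arc at any z' glued to z. *)
Definition transports (z z' : node glue_sum) : Prop :=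
  forall u : harc (cov_dom (gl_obj D (projT1 z))), at_node (projT2 z) u ->
  exists u' : harc (cov_dom (gl_obj D (projT1 z'))), at_node (projT2 z') u' /\
    eqv glue_harc (existT _ (projT1 z) u) (existT _ (projT1 z') u').

Lemma transports_refl z : transports z z.
Proof. intros u Hu; exists u; split; [exact Hu | apply rst_refl]. Qed.

Lemma transports_trans z1 z2 z3 :
  transports z1 z2 -> transports z2 z3 -> transports z1 z3.
Proof.
  intros H12 H23 u Hu.
  destruct (H12 u Hu) as [u2 [Hu2 R2]]; destruct (H23 u2 Hu2) as [u3 [Hu3 R3]].
  exists u3; split; [exact Hu3 | eapply rst_trans; eassumption].
Qed.

Lemma glue_node_transports z z' : glue_node z z' -> transports z z' /\ transports z' z.
Proof.
  intros (k & x & -> & ->); split; intros u Hu; simpl in *.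
  - exists (m1 (ch_map (gl_map D k)) u); split; [apply gmor_at_node; exact Hu |].
    apply rst_step; exists k, u; split; reflexivity.
  - destruct (proj2 (ch_is_covering _ _ (gl_map D k) x) u Hu) as [u0 [Hu0 Hs]].
    assert (Hv : exists v, at_node x v /\ m1 (ch_map (gl_map D k)) v = u).
    { destruct Hs as [Hs | Hs]; [exists u0 | exists (inv u0)];
        split; auto using at_node_inv.
      rewrite m_inv, Hs, inv_invol; reflexivity. }
    destruct Hv as [v [Hv <-]]; exists v; split; [exact Hv |].
    apply rst_sym, rst_step; exists k, v; split; reflexivity.
Qed.

Lemma eqv_transports z z' : eqv glue_node z z' -> transports z z'.
Proof.
  intro H; cut (transports z z' /\ transports z' z); [tauto |].
  induction H as [a b Hab | a | a b _ [] | a b c _ [] _ []].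
  - apply glue_node_transports; exact Hab.
  - split; apply transports_refl.
  - split; assumption.
  - split; eapply transports_trans; eassumption.
Qed.

Lemma glued_at_node i (x : node (cov_dom (gl_obj D i))) (e : harc glued_graph) :
  @at_node glued_graph (qclass glue_node (existT _ i x)) e ->
  exists u, at_node x u /\ e = qclass glue_harc (existT _ i u).
Proof.
  rewrite <- (qclass_repr glue_harc e); destruct (qrepr glue_harc e) as [j u].
  intros Hat.
  assert (Hz : eqv glue_node (existT _ j (src u)) (existT _ i x) \/
               eqv glue_node (existT _ j (tgt u)) (existT _ i x)).
  { destruct Hat as [Hat | Hat]; [left | right]; apply qclass_eq; rewrite <- Hat;
      symmetry; [exact (qg_src_class _ _ _ glue_harc_src _) |
       exact (qg_tgt_class _ _ _ glue_harc_src glue_harc_inv _)]. }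
  destruct Hz as [Hz | Hz]; apply eqv_transports in Hz;
    destruct (Hz u) as [u' [Hu' R]]; simpl in *;
    solve [left; reflexivity | right; reflexivity |
           exists u'; split; [exact Hu' | apply qclass_eq; exact R]].
Qed.

(* The gluing is a covering of X: the arcs at a class are those of any
   representative piece. *)
Lemma glued_covering : is_covering glued_map.
Proof.
  intro c; rewrite <- (qclass_repr glue_node c); destruct (qrepr glue_node c) as [i x].
  pose proof (cov_is_covering _ (gl_obj D i) x) as [Hinj Hsurj].
  split.
  - intros e e' He He' Hs.
    destruct (glued_at_node i x e He) as [u [Hu ->]].
    destruct (glued_at_node i x e' He') as [u' [Hu' ->]].
    rewrite 2!glued_map_harc in Hs.
    destruct (Hinj u u' Hu Hu' Hs) as [-> | ->]; [left; reflexivity | right].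
    exact (m_inv _ _ glue_proj (existT _ i u')).
  - intros v Hv; rewrite glued_map_node in Hv.
    destruct (Hsurj v Hv) as [u [Hu Hs]].
    exists (qclass glue_harc (existT _ i u)); split.
    + apply (gmor_at_node glue_proj (existT _ i x)).
      destruct Hu; [left | right]; simpl; congruence.
    + rewrite glued_map_harc; exact Hs.
Qed.

Definition glued_obj : cov_obj X := CovObj X glued_graph glued_map glued_covering.

Definition glue_in (i : gl_index D) : cov_hom (gl_obj D i) glued_obj.
Proof.
  refine (over_hom _ glued_obj (gcomp glue_proj (sum_in _ i)) _).
  split; intro; [apply glued_map_node | apply glued_map_harc].
Defined.

Lemma glue_in_compat k :
  hcomp_eq (glue_in (gl_tgt D k)) (gl_map D k) (glue_in (gl_src D k)).
Proof.
  split; intro; apply qclass_eq, rst_sym, rst_step; eexists k, _; split; reflexivity.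
Qed.

Section GlueUniversal.
Context (M : cov_obj X) (psi : forall i, cov_hom (gl_obj D i) M).
Hypothesis psi_compat :
  forall k, hcomp_eq (psi (gl_tgt D k)) (gl_map D k) (psi (gl_src D k)).

Definition glue_factor : cov_hom glued_obj M.
Proof.
  refine (over_hom glued_obj M (glued_desc (fun i => ch_map (psi i)) psi_compat) _).
  split; intro c; cbn [cov_map glued_obj];
    [rewrite <- (qclass_repr glue_node c) | rewrite <- (qclass_repr glue_harc c)];
    destruct qrepr as [i u];
    rewrite ?glued_desc_node, ?glued_desc_harc, ?glued_map_node, ?glued_map_harc;
    [apply (proj1 (ch_comm _ _ (psi i))) | apply (proj2 (ch_comm _ _ (psi i)))].
Defined.

Lemma glue_factor_in i : hcomp_eq glue_factor (glue_in i) (psi i).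
Proof.
  split; intro; [exact (glued_desc_node _ psi_compat i _) |
                 exact (glued_desc_harc _ psi_compat i _)].
Qed.

Lemma glue_factor_unique (h h' : cov_hom glued_obj M) :
  (forall i, hcomp_eq h (glue_in i) (psi i)) ->
  (forall i, hcomp_eq h' (glue_in i) (psi i)) -> hom_eq h h'.
Proof.
  intros H H';
    apply (quotient_hom_ext _ _ _ _ _ _ _ (sum_copair _ (fun i => ch_map (psi i))));
    split; intros [i u]; simpl; [apply (proj1 (H i)) | apply (proj2 (H i)) |
                                 apply (proj1 (H' i)) | apply (proj2 (H' i))].
Qed.

End GlueUniversal.
End Gluing.

(** * Colimits *)

Definition diagram_glue_data {J : smallcat} {X : graph} (F : diagram J X) : glue_data X :=
  GlueData X (ob J) (dob F) {a : ob J & {b : ob J & @hom J a b}}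
    (fun k => projT1 k) (fun k => projT1 (projT2 k)) (fun k => dhom F (projT2 (projT2 k))).

Theorem colimits (X : graph) : has_all_small_colimits X.
Proof.
  intros J F; set (D := diagram_glue_data F).
  exists (glued_obj D), (glue_in D); split.
  - intros i j u; exact (glue_in_compat D (existT _ i (existT _ j u))).
  - intros M q Hq.
    assert (Hcompat : forall k, hcomp_eq (q (gl_tgt D k)) (gl_map D k) (q (gl_src D k))).
    { intros [a [b f]]; apply Hq. }
    split.
    + exists (glue_factor D M q Hcompat); exact (glue_factor_in D M q Hcompat).
    + exact (glue_factor_unique D M q).
Qed.

(* Pushouts in C_X, in the form used below: two morphisms out of M can be
   completed to a commutative square, compatibly with any given family of
   morphisms to objects T j. *)
Definition span_glue_data {X : graph} {M N1 N2 : cov_obj X}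
  (g1 : cov_hom M N1) (g2 : cov_hom M N2) : glue_data X :=
  GlueData X (option bool)
    (fun i => match i with None => M | Some true => N1 | Some false => N2 end)
    bool (fun _ => None) Some
    (fun b => match b with true => g1 | false => g2 end).

Lemma amalgamation {X : graph} {I : Type} (T : I -> cov_obj X) {M N1 N2 : cov_obj X}
  (g1 : cov_hom M N1) (g2 : cov_hom M N2) (t0 : forall j, cov_hom M (T j))
  (t1 : forall j, cov_hom N1 (T j)) (t2 : forall j, cov_hom N2 (T j)) :
  (forall j, hcomp_eq (t1 j) g1 (t0 j)) -> (forall j, hcomp_eq (t2 j) g2 (t0 j)) ->
  exists (P : cov_obj X) (t : forall j, cov_hom P (T j))
         (k1 : cov_hom N1 P) (k2 : cov_hom N2 P),
    (forall j, hcomp_eq (t j) k1 (t1 j)) /\ (forall j, hcomp_eq (t j) k2 (t2 j)) /\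
    (forall m, m0 (ch_map k1) (m0 (ch_map g1) m) = m0 (ch_map k2) (m0 (ch_map g2) m)).
Proof.
  intros H1 H2; set (D := span_glue_data g1 g2).
  set (psi := fun j (i : option bool) =>
        match i return cov_hom (gl_obj D i) (T j) with
        | None => t0 j | Some true => t1 j | Some false => t2 j end).
  assert (Hpsi : forall j k,
             hcomp_eq (psi j (gl_tgt D k)) (gl_map D k) (psi j (gl_src D k))).
  { intros j [|]; [apply H1 | apply H2]. }
  exists (glued_obj D), (fun j => glue_factor D (T j) (psi j) (Hpsi j)),
    (glue_in D (Some true)), (glue_in D (Some false)).
  split; [| split].
  - intro j; exact (glue_factor_in D (T j) (psi j) (Hpsi j) (Some true)).
  - intro j; exact (glue_factor_in D (T j) (psi j) (Hpsi j) (Some false)).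
  - intro m; exact (eq_trans (proj1 (glue_in_compat D true) m)
                             (eq_sym (proj1 (glue_in_compat D false) m))).
Qed.

(** * Limits *)

(* The fibre product of the F j is in general not a covering, so the limit is
   built from the cones themselves. *)
Section Limit.
Context {X : graph} {J : smallcat} (F : diagram J X).

Definition legs (M : cov_obj X) : Type := forall j, cov_hom M (dob F j).

Definition leg_hom {M N : cov_obj X} (q : legs M) (qN : legs N) (g : cov_hom M N) : Prop :=
  forall j, hcomp_eq (qN j) g (q j).

Lemma leg_hom_id {M : cov_obj X} (q : legs M) : leg_hom q q (hid M).
Proof. intro j; split; intro; reflexivity. Qed.

Lemma leg_hom_comp {M N P : cov_obj X} (q : legs M) (qN : legs N) (qP : legs P)
  (g : cov_hom M N) (h : cov_hom N P) :
  leg_hom q qN g -> leg_hom qN qP h -> leg_hom q qP (hcomp h g).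
Proof.
  intros Hg Hh j; split; intro; simpl;
    [rewrite (proj1 (Hh j)); apply (proj1 (Hg j)) |
     rewrite (proj2 (Hh j)); apply (proj2 (Hg j))].
Qed.

Definition nsig : Type := (node X * forall j, node (cov_dom (dob F j)))%type.
Definition asig : Type := (harc X * forall j, harc (cov_dom (dob F j)))%type.

Definition node_sig {M : cov_obj X} (q : legs M) (m : node (cov_dom M)) : nsig :=
  (m0 (cov_map M) m, fun j => m0 (ch_map (q j)) m).
Definition arc_sig {M : cov_obj X} (q : legs M) (w : harc (cov_dom M)) : asig :=
  (m1 (cov_map M) w, fun j => m1 (ch_map (q j)) w).

Definition asig_tgt (l : asig) : nsig := (tgt (fst l), fun j => tgt (snd l j)).
Definition asig_inv (l : asig) : asig := (inv (fst l), fun j => inv (snd l j)).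

Lemma node_sig_tgt {M : cov_obj X} (q : legs M) w :
  node_sig q (tgt w) = asig_tgt (arc_sig q w).
Proof.
  unfold node_sig, asig_tgt, arc_sig; simpl; f_equal; [apply m_tgt |].
  apply functional_extensionality_dep; intro j; apply m_tgt.
Qed.

Lemma arc_sig_inv {M : cov_obj X} (q : legs M) w :
  arc_sig q (inv w) = asig_inv (arc_sig q w).
Proof.
  unfold asig_inv, arc_sig; simpl; f_equal; [apply m_inv |].
  apply functional_extensionality_dep; intro j; apply m_inv.
Qed.

Lemma node_sig_hom {M N : cov_obj X} (q : legs M) (qN : legs N) g m :
  leg_hom q qN g -> node_sig qN (m0 (ch_map g) m) = node_sig q m.
Proof.
  intro H; unfold node_sig; f_equal; [apply (proj1 (ch_comm _ _ g)) |].
  apply functional_extensionality_dep; intro j; apply (proj1 (H j)).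
Qed.

Lemma arc_sig_hom {M N : cov_obj X} (q : legs M) (qN : legs N) g w :
  leg_hom q qN g -> arc_sig qN (m1 (ch_map g) w) = arc_sig q w.
Proof.
  intro H; unfold arc_sig; f_equal; [apply (proj2 (ch_comm _ _ g)) |].
  apply functional_extensionality_dep; intro j; apply (proj2 (H j)).
Qed.

Fixpoint walk {M : cov_obj X} (q : legs M) (m : node (cov_dom M)) (ws : list asig)
  : Prop :=
  match ws with
  | nil => True
  | l :: ws' => exists w, src w = m /\ arc_sig q w = l /\ walk q (tgt w) ws'
  end.

Lemma walk_hom {M N : cov_obj X} (q : legs M) (qN : legs N) g :
  leg_hom q qN g -> forall ws m, walk q m ws -> walk qN (m0 (ch_map g) m) ws.
Proof.
  intros Hg ws; induction ws as [| l ws IH]; intros m H; simpl in *; auto.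
  destruct H as [w [<- [<- Hw]]].
  exists (m1 (ch_map g) w); split; [symmetry; apply m_src |].
  split; [apply arc_sig_hom; exact Hg |].
  rewrite <- m_tgt; apply IH; exact Hw.
Qed.

Definition future {M : cov_obj X} (q : legs M) (m : node (cov_dom M))
  (ws : list asig) : Prop :=
  exists (N : cov_obj X) (qN : legs N) (g : cov_hom M N),
    leg_hom q qN g /\ walk qN (m0 (ch_map g) m) ws.

Lemma walk_future {M : cov_obj X} (q : legs M) m ws : walk q m ws -> future q m ws.
Proof. intro H; exists M, q, (hid M); split; [apply leg_hom_id | exact H]. Qed.

Lemma future_hom {M N : cov_obj X} (q : legs M) (qN : legs N) g m :
  leg_hom q qN g -> future q m = future qN (m0 (ch_map g) m).
Proof.
  intro Hg; apply functional_extensionality; intro ws; apply propositional_extensionality.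
  split.
  - intros (N' & qN' & g' & Hg' & H).
    destruct (amalgamation (dob F) g g' q qN qN' Hg Hg')
      as (P & qP & k1 & k2 & Hk1 & Hk2 & Square).
    exists P, qP, k1; split; [exact Hk1 |].
    rewrite Square; exact (walk_hom qN' qP k2 Hk2 ws _ H).
  - intros (P & qP & h & Hh & H).
    exists P, qP, (hcomp h g); split; [exact (leg_hom_comp q qN qP g h Hg Hh) | exact H].
Qed.

Definition residual (l : asig) (W : list asig -> Prop) (ws : list asig) : Prop :=
  W (l :: ws).

Lemma future_tgt {M : cov_obj X} (q : legs M) w :
  residual (arc_sig q w) (future q (src w)) = future q (tgt w).
Proof.
  apply functional_extensionality; intro ws; apply propositional_extensionality.
  unfold residual; split.
  - intros (N & qN & g & Hg & e & He & Hl & H).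
    exists N, qN, g; split; [exact Hg |].
    replace (m0 (ch_map g) (tgt w)) with (tgt e); [exact H |].
    rewrite m_tgt; apply (covering_tgt (cov_map N)); [apply cov_is_covering | |].
    + rewrite He, m_src; reflexivity.
    + rewrite <- (arc_sig_hom q qN g w Hg) in Hl; exact (f_equal fst Hl).
  - intros (N & qN & g & Hg & H).
    exists N, qN, g; split; [exact Hg |].
    exists (m1 (ch_map g) w); split; [symmetry; apply m_src |].
    split; [apply arc_sig_hom; exact Hg | rewrite <- m_tgt; exact H].
Qed.

Definition state : Type := (nsig * (list asig -> Prop))%type.

Definition node_state {M : cov_obj X} (q : legs M) (m : node (cov_dom M)) : state :=
  (node_sig q m, future q m).
Definition arc_state {M : cov_obj X} (q : legs M) (w : harc (cov_dom M)) : state * asig :=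
  (node_state q (src w), arc_sig q w).

Definition state_tgt (a : state * asig) : state :=
  (asig_tgt (snd a), residual (snd a) (snd (fst a))).
Definition state_inv (a : state * asig) : state * asig := (state_tgt a, asig_inv (snd a)).

Lemma node_state_hom {M N : cov_obj X} (q : legs M) (qN : legs N) g m :
  leg_hom q qN g -> node_state qN (m0 (ch_map g) m) = node_state q m.
Proof.
  intro Hg; unfold node_state; rewrite (node_sig_hom q qN g m Hg), (future_hom q qN g m Hg).
  reflexivity.
Qed.

Lemma arc_state_hom {M N : cov_obj X} (q : legs M) (qN : legs N) g w :
  leg_hom q qN g -> arc_state qN (m1 (ch_map g) w) = arc_state q w.
Proof.
  intro Hg; unfold arc_state.
  rewrite <- m_src, (node_state_hom q qN g _ Hg), (arc_sig_hom q qN g w Hg).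
  reflexivity.
Qed.

Lemma state_tgt_arc {M : cov_obj X} (q : legs M) w :
  state_tgt (arc_state q w) = node_state q (tgt w).
Proof.
  unfold state_tgt, arc_state, node_state; simpl.
  rewrite node_sig_tgt, future_tgt; reflexivity.
Qed.

Lemma state_inv_arc {M : cov_obj X} (q : legs M) w :
  state_inv (arc_state q w) = arc_state q (inv w).
Proof.
  unfold state_inv, arc_state at 3; rewrite src_inv, arc_sig_inv, state_tgt_arc.
  reflexivity.
Qed.

Lemma arcs_meet {M1 M2 : cov_obj X} (q1 : legs M1) (q2 : legs M2) w1 w2 :
  node_state q1 (src w1) = node_state q2 (src w2) ->
  same_arc (m1 (cov_map M1) w1) (m1 (cov_map M2) w2) ->
  exists (N : cov_obj X) (qN : legs N) (g : cov_hom M1 N) e,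
    leg_hom q1 qN g /\ arc_state qN e = arc_state q2 w2 /\ same_arc (m1 (ch_map g) w1) e.
Proof.
  intros Hs Himg.
  assert (Hfut : future q1 (src w1) (arc_sig q2 w2 :: nil)).
  { apply (f_equal snd) in Hs; simpl in Hs; rewrite Hs.
    apply walk_future; exists w2; repeat split. }
  destruct Hfut as (N & qN & g & Hg & e & He & Hl & _).
  exists N, qN, g, e; split; [exact Hg | split].
  - unfold arc_state; rewrite He, Hl, (node_state_hom q1 qN g _ Hg), Hs; reflexivity.
  - apply (proj1 (cov_is_covering _ N (m0 (ch_map g) (src w1)))).
    + left; symmetry; apply m_src.
    + left; exact He.
    + pose proof (f_equal fst Hl) as Hx; simpl in Hx.
      rewrite (proj2 (ch_comm _ _ g)), Hx; exact Himg.
Qed.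

Definition cone_node (b : state) : Prop :=
  exists (M : cov_obj X) (q : legs M), is_cone F M q /\ exists m, b = node_state q m.
Definition cone_arc (a : state * asig) : Prop :=
  exists (M : cov_obj X) (q : legs M), is_cone F M q /\ exists w, a = arc_state q w.

Lemma cone_arc_src a : cone_arc a -> cone_node (fst a).
Proof.
  intros (M & q & Hc & w & ->); exists M, q; split; [exact Hc |].
  exists (src w); reflexivity.
Qed.

Lemma cone_arc_tgt a : cone_arc a -> cone_node (state_tgt a).
Proof.
  intros (M & q & Hc & w & ->); exists M, q; split; [exact Hc |].
  exists (tgt w); apply state_tgt_arc.
Qed.

Lemma cone_arc_inv a : cone_arc a -> cone_arc (state_inv a).
Proof.
  intros (M & q & Hc & w & ->); exists M, q; split; [exact Hc |].
  exists (inv w); apply state_inv_arc.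
Qed.

Definition lim_src (a : sig cone_arc) : sig cone_node :=
  exist _ (fst (proj1_sig a)) (cone_arc_src _ (proj2_sig a)).
Definition lim_tgt (a : sig cone_arc) : sig cone_node :=
  exist _ (state_tgt (proj1_sig a)) (cone_arc_tgt _ (proj2_sig a)).
Definition lim_inv (a : sig cone_arc) : sig cone_arc :=
  exist _ (state_inv (proj1_sig a)) (cone_arc_inv _ (proj2_sig a)).

Lemma lim_inv_invol a : lim_inv (lim_inv a) = a.
Proof.
  apply sig_ext; destruct a as [a (M & q & Hc & w & ->)]; simpl.
  rewrite 2!state_inv_arc, inv_invol; reflexivity.
Qed.

Lemma lim_src_inv a : lim_src (lim_inv a) = lim_tgt a.
Proof. apply sig_ext; reflexivity. Qed.

Definition lim_graph : graph :=
  Graph (sig cone_node) (sig cone_arc) lim_src lim_tgt lim_inv lim_inv_invol lim_src_inv.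

Definition lim_map : gmor lim_graph X.
Proof.
  refine (GMor lim_graph X (fun b => fst (fst (proj1_sig b)))
            (fun a => fst (snd (proj1_sig a))) _ _ _);
    intros [a (M & q & Hc & w & ->)]; simpl; [apply m_src | reflexivity | reflexivity].
Defined.

Definition lim_leg_map (j : ob J) : gmor lim_graph (cov_dom (dob F j)).
Proof.
  refine (GMor lim_graph _ (fun b => snd (fst (proj1_sig b)) j)
            (fun a => snd (snd (proj1_sig a)) j) _ _ _);
    intros [a (M & q & Hc & w & ->)]; simpl; [apply m_src | reflexivity | reflexivity].
Defined.

Lemma lim_arc_determined (a1 a2 : harc lim_graph) :
  src a1 = src a2 -> same_arc (m1 lim_map a1) (m1 lim_map a2) -> same_arc a1 a2.
Proof.
  destruct a1 as [a1 (M1 & q1 & Hc1 & w1 & ->)], a2 as [a2 (M2 & q2 & Hc2 & w2 & ->)].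
  intros Hs Himg; apply (f_equal (@proj1_sig _ _)) in Hs.
  destruct (arcs_meet q1 q2 w1 w2 Hs Himg) as (N & qN & g & e & Hg & He & [Hge | Hge]).
  - left; apply sig_ext; simpl.
    rewrite <- (arc_state_hom q1 qN g w1 Hg), Hge, He; reflexivity.
  - right; apply sig_ext; simpl.
    rewrite <- (arc_state_hom q1 qN g w1 Hg), Hge, <- state_inv_arc, He; reflexivity.
Qed.

Lemma lim_covering : is_covering lim_map.
Proof.
  intro b; split.
  - intros a1 a2 H1 H2 Himg.
    destruct (at_node_src b a1 H1) as [a1' [E1 S1]], (at_node_src b a2 H2) as [a2' [E2 S2]].
    apply (same_arc_trans _ a1'); [exact S1 |].
    apply (same_arc_trans _ a2'); [| apply same_arc_sym; exact S2].
    apply lim_arc_determined; [congruence |].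
    apply (same_arc_trans _ (m1 lim_map a1)); [apply same_arc_sym, gmor_same_arc; exact S1 |].
    apply (same_arc_trans _ (m1 lim_map a2)); [exact Himg | apply gmor_same_arc; exact S2].
  - intros v Hv; destruct b as [b (M & q & Hc & m & ->)]; simpl in Hv.
    destruct (proj2 (cov_is_covering _ M m) v Hv) as [u [Hu Himg]].
    destruct (at_node_src m u Hu) as [u' [<- Su]].
    exists (exist cone_arc (arc_state q u')
              (ex_intro _ M (ex_intro _ q (conj Hc (ex_intro _ u' eq_refl))))).
    split; [left; apply sig_ext; reflexivity |].
    change (same_arc (m1 (cov_map M) u') v).
    apply (same_arc_trans _ (m1 (cov_map M) u)); [apply same_arc_sym, gmor_same_arc |];
      assumption.
Qed.

Definition lim_obj : cov_obj X := CovObj X lim_graph lim_map lim_covering.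

Definition lim_proj (j : ob J) : cov_hom lim_obj (dob F j).
Proof.
  refine (over_hom lim_obj (dob F j) (lim_leg_map j) _).
  split; [intros [b (M & q & Hc & m & ->)] | intros [a (M & q & Hc & w & ->)]]; simpl;
    [apply (proj1 (ch_comm _ _ (q j))) | apply (proj2 (ch_comm _ _ (q j)))].
Defined.

Lemma lim_cone : is_cone F lim_obj lim_proj.
Proof.
  intros i j u; split; [intros [b (M & q & Hc & m & ->)] | intros [a (M & q & Hc & w & ->)]];
    simpl; [apply (proj1 (Hc i j u)) | apply (proj2 (Hc i j u))].
Qed.

Section Factor.
Context (M : cov_obj X) (q : legs M) (Hc : is_cone F M q).

Definition lim_factor_map : gmor (cov_dom M) lim_graph.
Proof.
  refine (GMor (cov_dom M) lim_graph
            (fun m => exist cone_node (node_state q m)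
                        (ex_intro _ M (ex_intro _ q (conj Hc (ex_intro _ m eq_refl)))))
            (fun w => exist cone_arc (arc_state q w)
                        (ex_intro _ M (ex_intro _ q (conj Hc (ex_intro _ w eq_refl)))))
            _ _ _); intro w; apply sig_ext; simpl;
    [reflexivity | symmetry; apply state_tgt_arc | symmetry; apply state_inv_arc].
Defined.

Definition lim_factor : cov_hom M lim_obj :=
  over_hom M lim_obj lim_factor_map (conj (fun _ => eq_refl) (fun _ => eq_refl)).

Lemma lim_factor_legs : leg_hom q lim_proj lim_factor.
Proof. intro j; split; intro; reflexivity. Qed.

End Factor.

Lemma lim_node_state (b : node lim_graph) : node_state lim_proj b = proj1_sig b.
Proof.
  destruct b as [b (M & q & Hc & m & ->)].
  exact (node_state_hom q lim_proj (lim_factor M q Hc) m (lim_factor_legs M q Hc)).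
Qed.

Lemma lim_arc_state (a : harc lim_graph) : arc_state lim_proj a = proj1_sig a.
Proof.
  destruct a as [a (M & q & Hc & w & ->)].
  exact (arc_state_hom q lim_proj (lim_factor M q Hc) w (lim_factor_legs M q Hc)).
Qed.

Lemma lim_factor_unique (M : cov_obj X) (q : legs M) (Hc : is_cone F M q)
  (h : cov_hom M lim_obj) : leg_hom q lim_proj h -> hom_eq h (lim_factor M q Hc).
Proof.
  intro Hh.
  split; intro; apply sig_ext; simpl;
    [rewrite <- lim_node_state; exact (node_state_hom q lim_proj h _ Hh) |
     rewrite <- lim_arc_state; exact (arc_state_hom q lim_proj h _ Hh)].
Qed.

End Limit.

Theorem limits (X : graph) : has_all_small_limits X.
Proof.
  intros J F; exists (lim_obj F), (lim_proj F); split; [apply lim_cone |].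
  intros M q Hc; split.
  - exists (lim_factor F M q Hc); apply lim_factor_legs.
  - intros h h' H H'.
    destruct (lim_factor_unique F M q Hc h H) as [A0 A1],
             (lim_factor_unique F M q Hc h' H') as [B0 B1].
    split; intro; [rewrite A0, B0 | rewrite A1, B1]; reflexivity.
Qed.

Theorem proposition5p2 :
  forall X : graph, has_all_small_limits X /\ has_all_small_colimits X.
Proof. intro X; split; [apply limits | apply colimits]. Qed.
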